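(* There exist a finite grid graph $G=P_a\square P_b$ (Cartesian product of two paths) and pebble distributions $D, D'$ on $G$ with $D(v)\le D'(v)$ for every vertex $v$, such that the covering ratio of $D'$ exceeds the covering ratio of $D$ by more than $1$, while the covering ratio ceiling of $D'$ is strictly smaller than the covering ratio ceiling of $D$.
   Context: A pebble distribution on a graph $G$ is a function $D:V(G)\to\mathbb{N}$; its size is $|D|=\sum_v D(v)$. A pebbling move along an edge $vu$ with $D(v)\ge 2$ removes two pebbles from $v$ and adds one pebble to $u$. A vertex $v$ is reachable under $D$ if $D(v)\ge 1$ or there is a sequence of pebbling moves whose last move places a pebble on $v$. The covering ratio of $D$ is (number of vertices reachable under $D$)$/|D|$. The weight function of $D$ is $W_D(u)=\sum_{v\in V(G)} D(v)2^{-d(u,v)}$, where $d$ is graph distance. The excess weight is $\widehat W_D(u)=W_D(u)-1$ if $W_D(u)>1$ and $\widehat W_D(u)=W_D(u)$ if $W_D(u)\le 1$. The covering ratio ceiling of $D$ is $\left(\sum_{v}W_D(v)-\sum_v \widehat W_D(v)\right)/\sum_v D(v)$. *)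

From HB Require Import structures.
From mathcomp Require Import all_boot all_order all_algebra.
From mathcomp Require Import boolp.
Set Implicit Arguments. Unset Strict Implicit. Unset Printing Implicit Defensive.
Import Order.TTheory GRing.Theory Num.Theory.

Section Pebbling.
Variable T : finType.
Variable e : rel T.

Definition psize (D : T -> nat) : nat := (\sum_(v : T) D v)%N.

Definition pmove (D D' : T -> nat) (v u : T) : Prop :=
  e v u /\ (2 <= D v)%N /\
  D' = (fun x => if x == v then (D x - 2)%N
                 else if x == u then (D x).+1 else D x).

Inductive pmoves : (T -> nat) -> (T -> nat) -> Prop :=
| pmoves_refl D : pmoves D D
| pmoves_step D D1 D2 v u : pmove D D1 v u -> pmoves D1 D2 -> pmoves D D2.

Definition reachable (D : T -> nat) (t : T) : Prop :=
  (1 <= D t)%N \/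
  exists D1 D2 v, pmoves D D1 /\ pmove D1 D2 v t.

Definition num_reachable (D : T -> nat) : nat :=
  #|[set t : T | `[< reachable D t >] ]|.

Local Open Scope ring_scope.

Definition covering_ratio (D : T -> nat) : rat :=
  (num_reachable D)%:R / (psize D)%:R.

(* Graph distance: the least n such that there is a walk of length n from
   u to v (searched among 0 .. #|T|-1; equals #|T| if v is unreachable
   from u, which never happens in a connected graph). *)
Definition has_walk (u v : T) (n : nat) : bool :=
  [exists p : n.-tuple T, path e u p && (last u p == v)].

Definition dist (u v : T) : nat := find (has_walk u v) (iota 0 #|T|).

Definition weight (D : T -> nat) (u : T) : rat :=
  \sum_(v : T) (D v)%:R * (2%:R^-1) ^+ (dist u v).

Definition excess_weight (D : T -> nat) (u : T) : rat :=
  if 1 < weight D u then weight D u - 1 else weight D u.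

Definition covering_ratio_ceiling (D : T -> nat) : rat :=
  (\sum_(v : T) weight D v - \sum_(v : T) excess_weight D v) / (psize D)%:R.

End Pebbling.

Definition path_adj (n : nat) : rel 'I_n :=
  fun i j => ((i.+1 == j :> nat) || (j.+1 == i :> nat)).

Definition grid (a b : nat) : rel ('I_a * 'I_b) :=
  fun x y => ((x.1 == y.1) && path_adj x.2 y.2) || ((x.2 == y.2) && path_adj x.1 y.1).
Arguments path_adj : clear implicits.
Arguments grid : clear implicits.

From mathcomp Require Import all_boot all_order all_algebra.
From mathcomp Require Import zify ring lra.
From mathcomp Require Import boolp.
Import Order.TTheory GRing.Theory Num.Theory.
Set Implicit Arguments. Unset Strict Implicit. Unset Printing Implicit Defensive.

(* The weight W_D(t) cannot increase under a pebbling move along vu, since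
   d(t,v) <= d(t,u) + 1 makes the lost 2 * 2^-d(t,v) at least the gained
   2^-d(t,u); and W_D(t) >= 1 when t is occupied.  Hence every reachable
   vertex has weight at least 1.  Put k pebbles on the centre of P_5 x P_5:
   the weight at distance n is k / 2^n.  For k = 3 only the 5 vertices at
   distance <= 1 have weight >= 1, so the covering ratio is at most 5/3; for
   k = 4 the 13 vertices at distance <= 2 are reached by explicit moves, so
   the covering ratio is at least 13/4 > 5/3 + 1.  The ceiling numerator
   counts the vertices of weight > 1, which are the same 5 vertices for
   k = 3 and k = 4, giving ceilings 5/3 > 5/4. *)

Section Pebbling.
Variables (T : finType) (e : rel T).

Definition move_pebble (D : T -> nat) (v u : T) : T -> nat :=
  fun x => if x == v then (D x - 2)%N else if x == u then (D x).+1 else D x.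

Lemma pmove_move_pebble D v u :
  e v u -> (2 <= D v)%N -> pmove e D (move_pebble D v u) v u.
Proof. by []. Qed.

Lemma reachable_adj D v t : e v t -> (2 <= D v)%N -> reachable e D t.
Proof.
move=> evt Dv2; right; exists D, (move_pebble D v t), v.
by split; [constructor | exact: pmove_move_pebble].
Qed.

Lemma reachable_adj2 D v w t :
  v != w -> e v w -> e w t -> (4 <= D v)%N -> reachable e D t.
Proof.
move=> /negbTE vNw evw ewt D4; set D1 := move_pebble D v w.
set D2 := move_pebble D1 v w.
right; exists D2, (move_pebble D2 w t), w; split; last first.
  by apply: pmove_move_pebble; rewrite // /D2 /D1 /move_pebble eq_sym vNw eqxx.
apply: (pmoves_step (pmove_move_pebble evw _)); first lia.
apply: (pmoves_step (pmove_move_pebble evw _)); last exact: pmoves_refl.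
rewrite /D1 /move_pebble eqxx; lia.
Qed.

Lemma distE u v n : (n < #|T|)%N -> has_walk e u v n ->
  (forall m, (m < n)%N -> ~~ has_walk e u v m) -> dist e u v = n.
Proof.
move=> n_lt walk_n shortest; rewrite /dist.
have -> : #|T| = (n + (#|T| - n))%N by rewrite subnKC // ltnW.
rewrite iotaD find_cat size_iota add0n.
have -> : has (has_walk e u v) (iota 0 n) = false.
  by apply/hasPn => m; rewrite mem_iota => /andP[_]; exact: shortest.
case: (#|T| - n)%N (subn_gt0 n #|T|) => [|k] /=; first by rewrite n_lt.
by rewrite walk_n addn0.
Qed.

Lemma dist_refl t : dist e t t = 0%N.
Proof.
apply: distE => //; first by apply/card_gt0P; exists t.
by apply/existsP; exists [tuple]; rewrite /= eqxx.
Qed.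

Local Open Scope ring_scope.

Lemma covering_ratio_ceilingE D : covering_ratio_ceiling e D =
  #|[set u | 1 < weight e D u]|%:R / (psize D)%:R.
Proof.
rewrite /covering_ratio_ceiling -sumrB -sum1_card natr_sum.
congr (_ / _); rewrite [RHS]big_mkcond; apply: eq_bigr => u _.
rewrite /excess_weight inE.
by case: ifP => _; [rewrite opprB addrC subrK | rewrite subrr].
Qed.

Lemma sum_pred1_mul (F : T -> rat) p : \sum_(x : T) (x == p)%:R * F x = F p.
Proof.
rewrite (bigD1 p) //= eqxx mul1r big1 ?addr0 // => x /negbTE ->.
by rewrite mul0r.
Qed.

Section WeightMonotone.
Hypothesis e_irrefl : irreflexive e.
Hypothesis dist_adj : forall t v u, e v u -> (dist e t v <= (dist e t u).+1)%N.

Lemma weight_pmove_le D D1 v u t : pmove e D D1 v u -> weight e D1 t <= weight e D t.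
Proof.
case=> evu [Dv2 ->]; change (weight e (move_pebble D v u) t <= weight e D t).
have uNv : (u == v) = false.
  by apply/negbTE; apply: contraTN evu => /eqP->; rewrite e_irrefl.
set h := fun n => (2%:R^-1 : rat) ^+ n.
have moved x : (move_pebble D v u x)%:R
    = (D x)%:R - 2%:R * (x == v)%:R + (x == u)%:R :> rat.
  rewrite /move_pebble; case: (eqVneq x v) => [->|_].
    by rewrite natrB // eq_sym uNv /=; ring.
  by case: (eqVneq x u) => _ /=; [rewrite -addn1 natrD |]; ring.
have halving : h (dist e t u) <= 2%:R * h (dist e t v).
  have := dist_adj t evu; case: (dist e t v) => [|n] dvu.
    rewrite /h expr0 mulr1; apply: (@le_trans _ _ 1); last by lra.
    by apply: exprn_ile1; lra.
  have -> : 2%:R * h n.+1 = h n by rewrite /h exprS mulrA mulfV ?mul1r.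
  by apply: ler_wiXn2l; [lra | lra | lia].
rewrite /weight (eq_bigr (fun x => (D x)%:R * h (dist e t x)
    - 2%:R * ((x == v)%:R * h (dist e t x)) + (x == u)%:R * h (dist e t x)));
  last by move=> x _; rewrite moved /h; ring.
rewrite big_split sumrB /= -mulr_sumr !sum_pred1_mul; lra.
Qed.

Lemma weight_pmoves_le D D1 t : pmoves e D D1 -> weight e D1 t <= weight e D t.
Proof.
elim=> // D0 D2 D3 v u step _ IH.
exact: le_trans IH (weight_pmove_le t step).
Qed.

Lemma weight_ge1 D t : (1 <= D t)%N -> 1 <= weight e D t.
Proof.
move=> Dt; rewrite /weight (bigD1 t) //= dist_refl expr0 mulr1.
have : 0 <= \sum_(x | x != t) (D x)%:R * (2%:R^-1 : rat) ^+ dist e t x.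
  by apply: sumr_ge0 => x _; rewrite mulr_ge0 ?exprn_ge0 //; lra.
have : (1 : rat) <= (D t)%:R by rewrite ler1n.
lra.
Qed.

Lemma reachable_weight_ge1 D t : reachable e D t -> 1 <= weight e D t.
Proof.
case=> [|[D1 [D2 [v [moves step]]]]]; first exact: weight_ge1.
apply: le_trans (weight_pmoves_le t moves).
apply: le_trans (weight_pmove_le t step).
case: step => evt [_ ->]; apply: weight_ge1.
by rewrite eqxx; case: eqP evt => [->|]; rewrite ?e_irrefl.
Qed.

Lemma num_reachable_le D :
  (num_reachable e D <= #|[set u | (1 <= weight e D u)%R]|)%N.
Proof.
apply/subset_leq_card/subsetP => u; rewrite !inE => /asboolP.
exact: reachable_weight_ge1.
Qed.

End WeightMonotone.

Definition pile (p : T) (k : nat) : T -> nat := fun x => if x == p then k else 0%N.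

Lemma psize_pile p k : psize (pile p k) = k.
Proof.
rewrite /psize (bigD1 p) //= /pile eqxx big1 ?addn0 // => x /negbTE.
by rewrite /pile => ->.
Qed.

Lemma weight_pile p k u :
  weight e (pile p k) u = k%:R * (2%:R^-1) ^+ dist e u p.
Proof.
rewrite /weight (bigD1 p) //= /pile eqxx big1 ?addr0 // => x /negbTE ->.
by rewrite mul0r.
Qed.

End Pebbling.

Section Grid.
Variables a b : nat.
Implicit Types u v w x y : 'I_a * 'I_b.

Definition manhattan u v : nat := (`|u.1 - v.1| + `|u.2 - v.2|)%N.

Lemma grid_irrefl : irreflexive (grid a b).
Proof. by move=> x; rewrite /grid /path_adj !eqxx /=; apply/negbTE; lia. Qed.

Lemma grid_sym : symmetric (grid a b).
Proof.
move=> x y; rewrite /grid /path_adj [y.1 == _]eq_sym [y.2 == _]eq_sym.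
by congr (_ && _ || _ && _); apply: orbC.
Qed.

Lemma manhattan_sym u v : manhattan u v = manhattan v u.
Proof. by rewrite /manhattan; lia. Qed.

Lemma manhattan_adj u x y : grid a b x y -> (manhattan u y <= (manhattan u x).+1)%N.
Proof.
rewrite /grid /path_adj /manhattan.
by case/orP => /andP[/eqP E adj]; rewrite E; case/orP: adj => /eqP; lia.
Qed.

Lemma manhattan_path_last u x p :
  path (grid a b) x p -> (manhattan u (last x p) <= manhattan u x + size p)%N.
Proof.
elim: p x => [|y p IH] x /=; first by rewrite addn0.
by case/andP => /(manhattan_adj u) xy /IH; lia.
Qed.

Lemma manhattan_eq0 u v : manhattan u v = 0%N -> u = v.
Proof.
case: u v => [[x1 ?] [x2 ?]] [[y1 ?] [y2 ?]]; rewrite /manhattan /= => d0.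
have E1 : x1 = y1 by lia. have E2 : x2 = y2 by lia.
by subst; congr (_, _); apply: val_inj.
Qed.

Lemma manhattan_step u v : (0 < manhattan u v)%N ->
  exists w, grid a b u w /\ manhattan w v = (manhattan u v).-1.
Proof.
case: u v => [[x1 x1a] [x2 x2b]] [[y1 y1a] [y2 y2b]]; rewrite /manhattan /= => d_gt0.
have move1 z (zb : (z < a)%N) : `|x1 - z|%N = 1%N ->
    grid a b (Ordinal x1a, Ordinal x2b) (Ordinal zb, Ordinal x2b).
  by move=> dz; rewrite /grid /path_adj /= eqxx /=; apply/orP; right; lia.
have move2 z (zb : (z < b)%N) : `|x2 - z|%N = 1%N ->
    grid a b (Ordinal x1a, Ordinal x2b) (Ordinal x1a, Ordinal zb).
  by move=> dz; rewrite /grid /path_adj /= eqxx /=; apply/orP; left; lia.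
case: (ltngtP x1 y1) => C1.
- have z1 : (x1.+1 < a)%N by lia.
  by exists (Ordinal z1, Ordinal x2b); split; [apply: move1 | rewrite /=]; lia.
- have z1 : (x1.-1 < a)%N by lia.
  by exists (Ordinal z1, Ordinal x2b); split; [apply: move1 | rewrite /=]; lia.
case: (ltngtP x2 y2) => C2; last by lia.
- have z2 : (x2.+1 < b)%N by lia.
  by exists (Ordinal x1a, Ordinal z2); split; [apply: move2 | rewrite /=]; lia.
- have z2 : (x2.-1 < b)%N by lia.
  by exists (Ordinal x1a, Ordinal z2); split; [apply: move2 | rewrite /=]; lia.
Qed.

Lemma manhattan_walk n u v : manhattan u v = n ->
  exists p, [/\ size p = n, path (grid a b) u p & last u p = v].
Proof.
elim: n u => [|n IH] u duv; first by exists [::]; rewrite (manhattan_eq0 duv).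
have [w [uw dwv]] := manhattan_step (ltac:(lia) : (0 < manhattan u v)%N).
have [p [size_p path_p last_p]] := IH w (ltac:(lia)).
by exists (w :: p); rewrite /= size_p uw.
Qed.

Lemma dist_grid u v : dist (grid a b) u v = manhattan u v.
Proof.
apply: distE.
- rewrite card_prod !card_ord /manhattan.
  by have := ltn_ord u.1; have := ltn_ord u.2; have := ltn_ord v.1;
    have := ltn_ord v.2; nia.
- have [p [size_p path_p last_p]] := manhattan_walk (erefl (manhattan u v)).
  have size_p' : size p == manhattan u v by rewrite size_p.
  by apply/existsP; exists (Tuple size_p'); rewrite /= path_p last_p eqxx.
- move=> m lt_m; apply/existsP => -[p /andP[path_p /eqP last_p]].
  have := manhattan_path_last u path_p.
  by move: lt_m; rewrite last_p size_tuple /manhattan !distnn; lia.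
Qed.

Lemma grid_dist_adj t v u :
  grid a b v u -> (dist (grid a b) t v <= (dist (grid a b) t u).+1)%N.
Proof. by rewrite grid_sym !dist_grid; apply: manhattan_adj. Qed.

Lemma card_grid_set (P : pred ('I_a * 'I_b)) :
  #|[set u | P u]| = (\sum_(i < a) \sum_(j < b) P (i, j))%N.
Proof.
rewrite pair_bigA -sum1_card big_mkcond /=.
by apply: eq_bigr => -[i j] _; rewrite inE; case: (P _).
Qed.

End Grid.

Local Open Scope ring_scope.

Definition centre : 'I_5 * 'I_5 := (Ordinal (isT : 2 < 5)%N, Ordinal (isT : 2 < 5)%N).

Lemma card_centre_ball1 : #|[set u | manhattan u centre <= 1]%N| = 5%N.
Proof. by rewrite card_grid_set !big_ord_recl !big_ord0. Qed.

Lemma card_centre_ball2 : #|[set u | manhattan u centre <= 2]%N| = 13%N.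
Proof. by rewrite card_grid_set !big_ord_recl !big_ord0. Qed.

Lemma weight_centre_pile k u : weight (grid 5 5) (pile centre k) u =
  k%:R * (2%:R^-1) ^+ manhattan u centre.
Proof. by rewrite weight_pile dist_grid. Qed.

Lemma half_pow_le n : (2%:R^-1 : rat) ^+ n.+2 <= 4%:R^-1.
Proof.
have : (2%:R^-1 : rat) ^+ n <= 1 by apply: exprn_ile1; lra.
rewrite !exprS mulrA; lra.
Qed.

Lemma pile34_weight_gt1 k u : (k = 3 \/ k = 4)%N ->
  (1 < weight (grid 5 5) (pile centre k) u) = (manhattan u centre <= 1)%N.
Proof.
rewrite weight_centre_pile; case: (manhattan u centre) => [|[|n]] k34.
- by rewrite expr0 mulr1 ltr1n; case: k34 => ->.
- by rewrite expr1; case: k34 => ->.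
- apply/negbTE; rewrite -leNgt; have := half_pow_le n.
  by case: k34 => -> /=; lra.
Qed.

Lemma pile3_weight_ge1 u :
  1 <= weight (grid 5 5) (pile centre 3) u -> (manhattan u centre <= 1)%N.
Proof.
rewrite weight_centre_pile; case: (manhattan u centre) => [|[|n]] //.
have := half_pow_le n; have : 0 <= (2%:R^-1 : rat) ^+ n.+2 by apply: exprn_ge0; lra.
lra.
Qed.

Lemma covering_ratio_ceiling_pile34 k : (k = 3 \/ k = 4)%N ->
  covering_ratio_ceiling (grid 5 5) (pile centre k) = 5%:R / k%:R.
Proof.
move=> k34; rewrite covering_ratio_ceilingE psize_pile.
rewrite (@eq_finset _ _ (fun u => manhattan u centre <= 1)%N);
  last by move=> u; apply: pile34_weight_gt1.
by rewrite card_centre_ball1.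
Qed.

Lemma num_reachable_pile3 : (num_reachable (grid 5 5) (pile centre 3) <= 5)%N.
Proof.
apply: (leq_trans (num_reachable_le (@grid_irrefl 5 5) (@grid_dist_adj 5 5) _)).
rewrite -[X in (_ <= X)%N]card_centre_ball1.
by apply/subset_leq_card/subsetP => u; rewrite !inE; apply: pile3_weight_ge1.
Qed.

Lemma reachable_pile4 u :
  (manhattan u centre <= 2)%N -> reachable (grid 5 5) (pile centre 4) u.
Proof.
rewrite manhattan_sym => near_u; have pile_c : pile centre 4 centre = 4%N.
  by rewrite /pile eqxx.
have [p [size_p path_p <-]] := manhattan_walk (erefl (manhattan centre u)).
case: p size_p path_p near_u => [|w [|w' [|? ?]]] /= <- //.
- by move=> _ _; left; rewrite pile_c.
- by case/andP => cw _ _; apply: (reachable_adj cw); rewrite pile_c.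
- case/andP => cw /andP[ww' _] _.
  apply: (reachable_adj2 _ cw ww'); last by rewrite pile_c.
  by apply: contraTN cw => /eqP <-; rewrite grid_irrefl.
Qed.

Lemma num_reachable_pile4 : (13 <= num_reachable (grid 5 5) (pile centre 4))%N.
Proof.
apply: (@leq_trans #|[set u | manhattan u centre <= 2]%N|).
  by rewrite card_centre_ball2.
apply/subset_leq_card/subsetP => u; rewrite !inE => near_u.
by apply/asboolP; apply: reachable_pile4.
Qed.

Theorem mainTheorem3 :
  exists (a b : nat) (D D' : 'I_a * 'I_b -> nat),
    (forall v, (D v <= D' v)%N) /\
    (0 < psize D)%N /\
    covering_ratio (grid a b) D + 1 < covering_ratio (grid a b) D' /\
    covering_ratio_ceiling (grid a b) D' < covering_ratio_ceiling (grid a b) D.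
Proof.
exists 5%N, 5%N, (pile centre 3), (pile centre 4); split.
  by move=> v; rewrite /pile; case: ifP.
rewrite psize_pile; split => //; split; last first.
  by rewrite !covering_ratio_ceiling_pile34 ?ltr_pM2l //; [left | right].
rewrite /covering_ratio !psize_pile.
have r3 : (num_reachable (grid 5 5) (pile centre 3))%:R <= 5%:R :> rat.
  by rewrite ler_nat num_reachable_pile3.
have r4 : 13%:R <= (num_reachable (grid 5 5) (pile centre 4))%:R :> rat.
  by rewrite ler_nat num_reachable_pile4.
lra.
Qed.
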